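(* Let $\Sigma$ and $Q$ be $p\times p$ symmetric positive definite matrices and $A$ a $p\times p$ matrix. Then $A\Sigma=\Sigma A^\top$ and $QA=A^\top Q$ both hold if and only if there exists a nonsingular matrix $B$ such that $Q=B^\top B$, $\Sigma=B^{-1}D(B^\top)^{-1}$ and $A=B^{-1}A^*B$, where $D$ and $A^*$ are diagonal matrices whose diagonal elements are, respectively, the eigenvalues of $\Sigma Q$ and of $A$. *)

From mathcomp Require Import all_boot all_order all_algebra.
From mathcomp Require Import reals.
Set Implicit Arguments. Unset Strict Implicit. Unset Printing Implicit Defensive.
Import Order.TTheory GRing.Theory Num.Theory.
Local Open Scope ring_scope.

Definition symmetric_mx (R : realType) (p : nat) (M : 'M[R]_p) : Prop :=
  M^T = M.

Definition spd_mx (R : realType) (p : nat) (M : 'M[R]_p) : Prop :=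
  symmetric_mx M /\
  forall x : 'cV[R]_p, x != 0 -> 0 < (x^T *m M *m x) 0 0.

(* D is a diagonal matrix whose diagonal entries are the eigenvalues of M,
   counted with (algebraic) multiplicity, i.e. the characteristic polynomial
   of M is prod_i (X - D_ii). *)
Definition diag_eigen_mx (R : realType) (p : nat) (M D : 'M[R]_p) : Prop :=
  is_diag_mx D /\ char_poly M = \prod_(i < p) ('X - (D i i)%:P).

From mathcomp Require Import all_boot all_order all_algebra.
From mathcomp Require Import reals complex.
Import Order.TTheory GRing.Theory Num.Theory.
Local Open Scope ring_scope.
Set Implicit Arguments. Unset Strict Implicit. Unset Printing Implicit Defensive.

(* Write Q = C^T C. The two relations say exactly that M = C A C^-1 and
   S = C Sigma C^T are symmetric and commute, so a single orthogonal V
   diagonalizes both, and B = V C does the job; D and A* are then similar to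
   Sigma Q and A, hence carry their eigenvalues. Commuting real symmetric
   matrices are diagonalized by adjoining, one row at a time, a unit common
   eigenvector orthogonal to the rows already built; it exists because
   eigenvalues of real symmetric matrices are real. *)

Lemma char_poly_conj (R : comUnitRingType) n (B M : 'M[R]_n) : B \in unitmx ->
  char_poly (invmx B *m M *m B) = char_poly M.
Proof.
move=> Bu; rewrite /char_poly /char_poly_mx.
set pB := map_mx polyC B; set pBi := map_mx polyC (invmx B).
have pBiK : pBi *m pB = 1%:M by rewrite -map_mxM mulVmx // map_mx1.
rewrite {1}(_ : 'X%:M = pBi *m 'X%:M *m pB); last first.
  by rewrite scalar_mxC -mulmxA pBiK mulmx1.
rewrite !map_mxM -/pB -/pBi -mulmxBl -mulmxBr !det_mulmx mulrAC -det_mulmx pBiK.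
by rewrite det1 mul1r.
Qed.

Definition eigenrows (R : pzRingType) k n (V : 'M[R]_(k, n)) (S : 'M[R]_n) :=
  exists d : 'rV_k, V *m S = diag_mx d *m V.

Lemma eigenrows_col_mx (R : pzRingType) k n (u : 'rV[R]_n) (V : 'M_(k, n)) S a :
  u *m S = a *: u -> eigenrows V S -> eigenrows (col_mx u V) S.
Proof.
move=> uS [d VS]; exists (row_mx a%:M d).
rewrite mul_col_mx diag_mx_row mul_block_col !mul0mx addr0 add0r VS uS.
have -> : diag_mx (a%:M : 'rV_1) = a%:M.
  by apply/matrixP => i j; rewrite !ord1 !mxE.
by rewrite mul_scalar_mx.
Qed.

Lemma stablemx_kermx_tr (F : fieldType) k n (V : 'M[F]_(k, n)) S :
  S^T = S -> eigenrows V S -> stablemx (kermx V^T) S.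
Proof.
move=> symS [d VS]; apply/sub_kermxP.
rewrite -mulmxA -{1}symS -trmx_mul VS trmx_mul tr_diag_mx mulmxA.
by rewrite mulmx_ker mul0mx.
Qed.

Lemma mulmx_trmx_row_gt0 (R : realDomainType) n (x : 'rV[R]_n) :
  x != 0 -> 0 < (x *m x^T) 0 0.
Proof.
move=> x0; have -> : (x *m x^T) 0 0 = \sum_j x 0 j ^+ 2.
  by rewrite mxE; apply: eq_bigr => j _; rewrite mxE expr2.
rewrite lt_def sumr_ge0 ?andbT => [|j _]; last exact: sqr_ge0.
apply: contra x0 => /eqP /psumr_eq0P sq0; apply/eqP/rowP => j.
by have /eqP := sq0 (fun i _ => sqr_ge0 _) j isT; rewrite sqrf_eq0 mxE => /eqP.
Qed.

Definition posdef_mx (R : numDomainType) n (Q : 'M[R]_n) :=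
  forall x : 'cV_n, x != 0 -> 0 < (x^T *m Q *m x) 0 0.

Lemma orthodiag_posdef_gt0 (R : numDomainType) n (Q V : 'M[R]_n) (q : 'rV_n) :
  posdef_mx Q -> V *m V^T = 1%:M -> V *m Q = diag_mx q *m V ->
  forall i, 0 < q 0 i.
Proof.
move=> posQ VVt VQ i.
have rowQ : row i V *m Q = q 0 i *: row i V.
  by rewrite -row_mul VQ row_mul row_diag_mx -scalemxAl -rowE.
have row1 : (row i V *m (row i V)^T) 0 0 = 1.
  have -> : (row i V *m (row i V)^T) 0 0 = (V *m V^T) i i.
    by rewrite !mxE; apply: eq_bigr => k _; rewrite !mxE.
  by rewrite VVt mxE eqxx.
have rowT0 : (row i V)^T != 0.
  by apply: contra_eq_neq row1 => ->; rewrite mulmx0 mxE eq_sym oner_neq0.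
by have := posQ _ rowT0; rewrite trmxK rowQ -scalemxAl mxE row1 mulr1.
Qed.

Section RealSymmetric.
Variable R : rcfType.
Local Notation toC := (real_complex R).

Lemma sym_eigenvalue_real n (S : 'M[R]_n) (lam : R[i]) : S^T = S ->
  eigenvalue (map_mx toC S) lam -> exists r : R, lam = toC r.
Proof.
move=> symS; set SC := map_mx toC S.
have hermSC : SC \is hermsymmx.
  apply: realsym_hermsym.
    by apply/is_hermitianmxP; rewrite expr0 scale1r map_mx_id // map_trmx symS.
  by apply/mxOverP => i j; rewrite mxE; apply/complex_realP; exists (S i j).
have /mxOverP real_d := hermitian_spectral_diag_real hermSC.
have /hermitian_normalmx/orthomx_spectralP -> := hermSC.
rewrite eigenvalue_root_char char_poly_conj ?spectral_unit //.
rewrite char_poly_trig ?diag_mx_is_trig // rootE horner_prod.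
move=> /prodf_eq0 [j _]; rewrite hornerXsubC subr_eq0 mxE eqxx mulr1n => /eqP ->.
exact/complex_realP/real_d.
Qed.

Lemma sym_stable_eigenspace n m (S : 'M[R]_n) (W : 'M[R]_(m, n)) :
  S^T = S -> W != 0 -> stablemx W S -> exists r, (W :&: eigenspace S r)%MS != 0.
Proof.
move=> symS W0 WS; set B := row_base W.
have Bfree : row_free B := row_base_free W.
have BS : stablemx B S by rewrite stablemx_row_base.
have rankW : (0 < \rank W)%N by rewrite lt0n mxrank_eq0.
(* The restriction of S to W need not be symmetric, so its eigenvalue is
   found over the complex numbers and shown real as an eigenvalue of S. *)
have [lam lamS'] := eigenvalue_closed (map_mx toC (conjmx B S)) rankW.
have lamS : eigenvalue (map_mx toC S) lam.
  apply: (eigenvalue_conjmx (V := map_mx toC B)).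
  - by rewrite -map_mxM map_submx.
  - by rewrite row_free_map.
  - by rewrite /conjmx -map_pinvmx -!map_mxM.
have [r lamE] := sym_eigenvalue_real symS lamS.
rewrite lamE eigenvalue_map in lamS'.
have EB0 : eigenspace (conjmx B S) r *m B != 0 by rewrite mulmx_free_eq0.
have EBsub : (eigenspace (conjmx B S) r *m B <= W :&: eigenspace S r)%MS.
  rewrite sub_capmx -sub_eigenspace_conjmx // submx_refl andbT.
  by rewrite -(eq_row_base W) submxMl.
exists r; apply: contraNneq EB0 => capW0.
by rewrite -submx0 -capW0.
Qed.

Lemma comm_sym_common_eigenspace n m (S M : 'M[R]_n) (W : 'M[R]_(m, n)) :
  S^T = S -> M^T = M -> S *m M = M *m S ->
  W != 0 -> stablemx W S -> stablemx W M ->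
  exists a b, (W :&: eigenspace S a :&: eigenspace M b)%MS != 0.
Proof.
move=> symS symM SM W0 WS WM.
have [a WSa0] := sym_stable_eigenspace symS W0 WS.
have WSaM : stablemx (W :&: eigenspace S a)%MS M.
  rewrite sub_capmx (submx_trans (submxMr M (capmxSl _ _)) WM) /=.
  apply: submx_trans (submxMr M (capmxSr _ _)) _.
  exact: comm_mx_stable_eigenspace.
have [b WSaMb0] := sym_stable_eigenspace symM WSa0 WSaM.
by exists a, b.
Qed.

Lemma row_normalize n (x : 'rV[R]_n) :
  x != 0 -> exists c : R, (c *: x) *m (c *: x)^T = 1%:M.
Proof.
move=> x0; have xx_gt0 := mulmx_trmx_row_gt0 x0.
set s := Num.sqrt ((x *m x^T) 0 0).
have s0 : s != 0 by rewrite sqrtr_eq0 -ltNge.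
exists s^-1; apply/rowP => i.
rewrite !ord1 linearZ /= -scalemxAl -scalemxAr scalerA.
rewrite mxE [RHS]mxE eqxx mulr1n -[X in _ * X](@sqr_sqrtr _ _ (ltW xx_gt0)) -/s.
by rewrite -expr2 -exprMn mulVf // expr1n.
Qed.

Section CommutingSymmetric.
Variables (n : nat) (S M : 'M[R]_n).
Hypotheses (symS : S^T = S) (symM : M^T = M) (SM : S *m M = M *m S).

Lemma orthonormal_eigenrows_ext k (V : 'M[R]_(k, n)) : (k < n)%N ->
  V *m V^T = 1%:M -> eigenrows V S -> eigenrows V M ->
  exists U : 'M[R]_(k.+1, n), [/\ U *m U^T = 1%:M, eigenrows U S & eigenrows U M].
Proof.
move=> lt_kn VVt VS VM; set W := kermx V^T.
have W0 : W != 0.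
  rewrite -mxrank_eq0 mxrank_ker mxrank_tr subn_eq0 -ltnNge.
  exact: leq_ltn_trans (rank_leq_row V) lt_kn.
have [a [b Wab0]] := comm_sym_common_eigenspace symS symM SM W0
  (stablemx_kermx_tr symS VS) (stablemx_kermx_tr symM VM).
set x := nz_row (W :&: eigenspace S a :&: eigenspace M b)%MS.
have x0 : x != 0 by rewrite nz_row_eq0.
have [c uu] := row_normalize x0; set u := c *: x in uu.
have uWab : (u <= W :&: eigenspace S a :&: eigenspace M b)%MS.
  by rewrite scalemx_sub // nz_row_sub.
have /sub_kermxP uVt : (u <= W)%MS.
  exact: submx_trans uWab (submx_trans (capmxSl _ _) (capmxSl _ _)).
have /eigenspaceP uS : (u <= eigenspace S a)%MS.
  exact: submx_trans uWab (submx_trans (capmxSl _ _) (capmxSr _ _)).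
have /eigenspaceP uM : (u <= eigenspace M b)%MS.
  exact: submx_trans uWab (capmxSr _ _).
have Vut : V *m u^T = 0 by rewrite -[V]trmxK -trmx_mul uVt trmx0.
suff : exists U : 'M[R]_(1 + k, n),
    [/\ U *m U^T = 1%:M, eigenrows U S & eigenrows U M] by [].
exists (col_mx u V); split.
- by rewrite tr_col_mx mul_col_row uu uVt Vut VVt scalar_mx_block.
- exact: eigenrows_col_mx uS VS.
- exact: eigenrows_col_mx uM VM.
Qed.

Lemma comm_sym_orthodiag :
  exists V : 'M[R]_n, [/\ V *m V^T = 1%:M, eigenrows V S & eigenrows V M].
Proof.
suff ext k : (k <= n)%N ->
    exists V : 'M[R]_(k, n), [/\ V *m V^T = 1%:M, eigenrows V S & eigenrows V M].
  exact: ext n (leqnn n).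
elim: k => [_|k IHk lt_kn].
  by exists 0; split; [apply/matrixP => -[] | exists 0; rewrite mul0mx mulmx0..].
have [V [VVt VS VM]] := IHk (ltnW lt_kn).
exact: orthonormal_eigenrows_ext lt_kn VVt VS VM.
Qed.

End CommutingSymmetric.

Lemma posdef_factor n (Q : 'M[R]_n) : Q^T = Q -> posdef_mx Q ->
  exists2 C : 'M[R]_n, C \in unitmx & Q = C^T *m C.
Proof.
move=> symQ posQ.
have [V [VVt [q VQ] _]] := comm_sym_orthodiag symQ symQ (erefl (Q *m Q)).
have [Vu _] := mulmx1_unit VVt.
have q_gt0 := orthodiag_posdef_gt0 posQ VVt VQ.
pose s := \row_j Num.sqrt (q 0 j).
exists (diag_mx s *m V).
  rewrite unitmx_mul Vu andbT unitmxE det_diag unitfE; apply/prodf_neq0 => j _.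
  by rewrite mxE sqrtr_eq0 -ltNge.
rewrite trmx_mul tr_diag_mx -mulmxA (mulmxA (diag_mx s)) mulmx_diag.
have -> : \row_j (s 0 j * s 0 j) = q.
  by apply/rowP => j; rewrite !mxE -expr2 sqr_sqrtr // ltW.
by rewrite -VQ mulmxA (mulmx1C VVt) mul1mx.
Qed.

End RealSymmetric.

Section Congruence.
Variables (R : comUnitRingType) (n : nat) (C Q A : 'M[R]_n).
Hypotheses (Cu : C \in unitmx) (QE : Q = C^T *m C) (QA : Q *m A = A^T *m Q).

Lemma congr_conj_sym : (C *m A *m invmx C)^T = C *m A *m invmx C.
Proof.
have CtM : C^T *m (C *m A *m invmx C) = A^T *m C^T.
  by rewrite !mulmxA -QE QA QE !mulmxA mulmxK.
have Ctu : C^T \in unitmx by rewrite unitmx_tr.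
rewrite -[RHS](mulKmx Ctu) CtM.
by rewrite !trmx_mul trmx_inv !mulmxA.
Qed.

Lemma congr_conj_comm (Sigma : 'M[R]_n) : A *m Sigma = Sigma *m A^T ->
  C *m Sigma *m C^T *m (C *m A *m invmx C) =
  C *m A *m invmx C *m (C *m Sigma *m C^T).
Proof.
move=> ASigma; rewrite !mulmxA -(mulmxA _ C^T C) -QE -(mulmxA _ Q A) QA.
rewrite (mulmxA _ A^T Q) QE !mulmxA mulmxK // mulmxKV //.
by rewrite -(mulmxA C A Sigma) ASigma !mulmxA.
Qed.

End Congruence.

Lemma comm_posdef_codiag (R : rcfType) n (Sigma Q A : 'M[R]_n) :
  Sigma^T = Sigma -> Q^T = Q -> posdef_mx Q ->
  A *m Sigma = Sigma *m A^T -> Q *m A = A^T *m Q ->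
  exists B (d e : 'rV_n), [/\ B \in unitmx, Q = B^T *m B,
    Sigma = invmx B *m diag_mx d *m invmx B^T & A = invmx B *m diag_mx e *m B].
Proof.
move=> symSigma symQ posQ ASigma QA.
have [C Cu QE] := posdef_factor symQ posQ.
have symS : (C *m Sigma *m C^T)^T = C *m Sigma *m C^T.
  by rewrite !trmx_mul trmxK symSigma mulmxA.
have [V [VVt [d VS] [e VM]]] := comm_sym_orthodiag symS (congr_conj_sym Cu QE QA)
  (congr_conj_comm Cu QE QA ASigma).
have [Vu _] := mulmx1_unit VVt.
set B := V *m C.
have Bu : B \in unitmx by rewrite unitmx_mul Vu.
have Btu : B^T \in unitmx by rewrite unitmx_tr.
exists B, d, e; split => //.
- by rewrite QE trmx_mul -mulmxA (mulmxA V^T) (mulmx1C VVt) mul1mx.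
- have -> : diag_mx d = B *m Sigma *m B^T.
    transitivity (V *m (C *m Sigma *m C^T) *m V^T).
      by rewrite VS -mulmxA VVt mulmx1.
    by rewrite trmx_mul !mulmxA.
  by rewrite -mulmxA mulmxK // mulKmx.
- have BA : B *m A = diag_mx e *m B by rewrite mulmxA -VM !mulmxA mulmxKV.
  by rewrite -mulmxA -BA mulKmx.
Qed.

Lemma codiag_comm (R : comUnitRingType) n (B Q Sigma A : 'M[R]_n) (d e : 'rV_n) :
  B \in unitmx -> Q = B^T *m B ->
  Sigma = invmx B *m diag_mx d *m invmx B^T -> A = invmx B *m diag_mx e *m B ->
  A *m Sigma = Sigma *m A^T /\ Q *m A = A^T *m Q.
Proof.
move=> Bu -> -> ->; have Btu : B^T \in unitmx by rewrite unitmx_tr.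
rewrite !trmx_mul tr_diag_mx trmx_inv !mulmxA.
split; rewrite mulmxK // mulmxKV //.
by rewrite -(mulmxA (invmx B) (diag_mx e)) diag_mxC mulmxA.
Qed.

Lemma diag_eigen_mx_conj (R : realType) n (B : 'M[R]_n) (d : 'rV_n) :
  B \in unitmx -> diag_eigen_mx (invmx B *m diag_mx d *m B) (diag_mx d).
Proof.
move=> Bu; split; first exact: diag_mx_is_diag.
by rewrite char_poly_conj // char_poly_trig ?diag_mx_is_trig.
Qed.

Theorem mainTheorem10 (R : realType) (p : nat) (Sigma Q A : 'M[R]_p) :
  spd_mx Sigma -> spd_mx Q ->
  (A *m Sigma = Sigma *m A^T /\ Q *m A = A^T *m Q) <->
  (exists (B D Astar : 'M[R]_p),
      [/\ B \in unitmx,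
          Q = B^T *m B,
          Sigma = invmx B *m D *m invmx (B^T),
          A = invmx B *m Astar *m B
        & diag_eigen_mx (Sigma *m Q) D /\ diag_eigen_mx A Astar]).
Proof.
move=> [symSigma _] [symQ posQ]; split.
  case=> ASigma QA.
  have [B [d [e [Bu QE SigmaE AE]]]] :=
    comm_posdef_codiag symSigma symQ posQ ASigma QA.
  exists B, (diag_mx d), (diag_mx e); split=> //; split.
  - have -> : Sigma *m Q = invmx B *m diag_mx d *m B.
      by rewrite SigmaE QE !mulmxA mulmxKV // unitmx_tr.
    exact: diag_eigen_mx_conj.
  - by rewrite AE; apply: diag_eigen_mx_conj.
case=> B [D [Astar [Bu QE SigmaE AE]]].
case=> [[/diag_mxP [d DE] _] [/diag_mxP [e AstE] _]].
by rewrite DE in SigmaE; rewrite AstE in AE; apply: codiag_comm Bu QE SigmaE AE.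
Qed.
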